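(* Let $n\ge 1$, $0\le r\le n$ and let $a$ be an integer with $a\ge 1$, and $a\ge 2$ if $r\ge 1$. Then (i) $\dim_{\mathbb K}\left(R_n/\mathcal{I}_{n,0}^{\langle a\rangle}\right)=(a-1)^{n-1}(a+n-1)$; (ii) $\dim_{\mathbb K}\left(R_n/\mathcal{I}_{n,r}^{\langle a\rangle}\right)=\sum_{i=0}^r(-1)^i\binom{r}{i}\theta_{n-i}(a-1)$, where $\theta_l(x)=x^{l-1}(x+l)$ for $l\ge 1$ and $\theta_0(x)=1$.
   Context: $\mathbb K$ is a field and $R_m=\mathbb K[x_1,\ldots,x_m]$. For integers $m\ge 1$, $0\le s\le m$ and $a\ge1$ (with $a\ge 2$ when $s\ge1$), define the weight $\omega(i)=a$ if $1\le i\le m-s$ and $\omega(i)=a-1$ if $m-s<i\le m$, and the monomial ideal $\mathcal{I}_{m,s}^{\langle a\rangle}=\langle x_i^{\omega(i)},\ x_i^{\omega(i)-1}x_j^{\omega(j)-1} : i,j\in[m],\ i\ne j\rangle\subseteq R_m$. Here $0^0=1$. *)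

From HB Require Import structures.
From mathcomp Require Import all_boot all_algebra.
From mathcomp Require Import mpoly.
Set Implicit Arguments. Unset Strict Implicit. Unset Printing Implicit Defensive.
Import GRing.Theory.
Local Open Scope ring_scope.

Definition in_ideal (K : fieldType) (n : nat) (I : finType)
    (g : I -> {mpoly K[n]}) (p : {mpoly K[n]}) : Prop :=
  exists c : I -> {mpoly K[n]}, p = \sum_(i : I) c i * g i.

(* dim_K (K[x_1..x_n] / <g>) = d : there are d polynomials whose classes
   modulo the ideal form a K-basis of the quotient. *)
Definition quot_dim (K : fieldType) (n : nat) (I : finType)
    (g : I -> {mpoly K[n]}) (d : nat) : Prop :=
  exists b : 'I_d -> {mpoly K[n]},
    (forall p : {mpoly K[n]}, exists c : 'I_d -> K,
        in_ideal g (p - \sum_(k < d) c k *: b k)) /\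
    (forall c : 'I_d -> K, in_ideal g (\sum_(k < d) c k *: b k) ->
        forall k, c k = 0).

(* weight: variables are indexed 0..m-1; the paper's index i (1-based) is
   i+1 here, so omega(i) = a iff i+1 <= m - s iff i < m - s. *)
Definition omega (m s a : nat) (i : 'I_m) : nat :=
  if (i < m - s)%N then a else (a - 1)%N.

(* generators of I_{m,s}^{<a>}: x_i^{omega i} and, for i <> j,
   x_i^{omega i - 1} x_j^{omega j - 1} (the diagonal pairs give 0,
   which does not change the ideal). *)
Definition Igens (K : fieldType) (m s a : nat)
    (t : 'I_m + ('I_m * 'I_m)) : {mpoly K[m]} :=
  match t with
  | inl i => 'X_i ^+ omega s a i
  | inr (i, j) => if i != j then
                    'X_i ^+ (omega s a i - 1) * 'X_j ^+ (omega s a j - 1)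
                  else 0
  end.

Definition theta (l : nat) (x : int) : int :=
  if l is 0%N then 1 else x ^+ (l - 1) * (x + l%:Z).

From HB Require Import structures.
From mathcomp Require Import all_boot all_algebra.
From mathcomp Require Import mpoly.
From mathcomp Require Import zify ring.
Import GRing.Theory.
Set Implicit Arguments. Unset Strict Implicit. Unset Printing Implicit Defensive.

(* The ideal I = I_{n,s}^{<a>} is generated by monomials, so the classes of
   the standard monomials (those divisible by no generator) form a K-basis of
   R_n / I.  A monomial x^e is standard iff e_i < w_i for every i and
   e_i >= w_i - 1 holds for at most one index i, where w = omega is the
   weight.  Splitting according to which coordinate (if any) reaches w_i - 1,
   the standard exponents are counted by products of interval lengths:
     #std = prod_i (w_i - 1) + sum_i prod_{j <> i} (w_j - 1) = Q(x) + Q'(x),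
   where Q(T) = prod_i (T - c_i) with c_i = x - (w_i - 1) and x = a - 1.
   For the weight omega, Q = T^(n-s) (T - 1)^s; expanding it binomially and
   using theta_l(x) = x^l + (x^l)' gives the alternating sum (ii), and the
   case s = 0 specializes it to (a-1)^(n-1) (a+n-1), which is (i). *)

Lemma card_ord_interval N lo hi : hi <= N ->
  #|[pred x : 'I_N | lo <= x < hi]| = hi - lo.
Proof.
move=> hiN; rewrite -sum1_card.
rewrite -(big_mkord (fun i => lo <= i < hi) (fun=> 1)).
rewrite -(big_nat_widen _ _ _ _ _ hiN).
rewrite -(@big_nat_widenl _ _ _ lo 0 hi xpredT (fun=> 1) (leq0n lo)).
by rewrite sum_nat_const_nat muln1.
Qed.

Lemma le1_card_indicator (T : finType) (A : {set T}) :
  (#|A| <= 1 : nat) = (A == set0) + \sum_x (A == [set x] : nat).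
Proof.
have [-> | nA0] := eqVneq A set0.
  rewrite cards0 big1 // => x _; apply/eqP; rewrite eqb0.
  by apply/eqP => /setP /(_ x); rewrite !inE eqxx.
have [/eqP A1 | A1] := eqVneq #|A| 1.
  have [x ->] := cards1P A1.
  rewrite cards1 (bigD1 x) //= eqxx big1 // => y yx; apply/eqP; rewrite eqb0.
  by apply/eqP => /set1_inj /eqP; rewrite eq_sym (negbTE yx).
rewrite big1 => [|x _]; last first.
  by apply/eqP; rewrite eqb0; apply: contra A1 => /eqP ->; rewrite cards1.
by rewrite leq_eqVlt (negbTE A1) ltnS leqn0 cards_eq0 (negbTE nA0).
Qed.

Lemma card_le1_pairs (T : finType) (A : {set T}) :
  (#|A| <= 1) = [forall i, forall j, (i != j) ==> ~~ ((i \in A) && (j \in A))].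
Proof.
apply/card_le1_eqP/forallP => [eqA i | noPair i j iA jA].
  apply/forallP => j; apply/implyP; apply: contra => /andP [iA jA].
  by rewrite (eqA i j iA jA).
apply/eqP; apply: contraT => ij.
by have /forallP/(_ i)/implyP/(_ ij) := noPair j; rewrite iA jA.
Qed.

Lemma sum_indicator_card (T : finType) (P : pred T) :
  \sum_x (P x : nat) = #|[set x | P x]|.
Proof. by rewrite -sum1dep_card [RHS]big_mkcond. Qed.

Definition in_box n (lo hi e : 'I_n -> nat) : bool := [forall i, lo i <= e i < hi i].

Lemma card_box n N (lo hi : 'I_n -> nat) : (forall i, hi i <= N) ->
  #|[set f : {ffun 'I_n -> 'I_N} | in_box lo hi (fun i => f i)]|
  = \prod_i (hi i - lo i).
Proof.
move=> hiN; pose F i := [pred x : 'I_N | lo i <= x < hi i].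
have -> : #|[set f : {ffun 'I_n -> 'I_N} | in_box lo hi (fun i => f i)]|
          = #|family F|.
  by apply: eq_card => f; rewrite inE; apply/forallP/familyP.
rewrite card_family foldrE big_map big_enum /=.
by apply: eq_bigr => i _; apply: card_ord_interval.
Qed.

Section Admissible.
Variables (n : nat) (w : 'I_n -> nat).

Definition tops (e : 'I_n -> nat) : {set 'I_n} := [set i | w i - 1 <= e i].

Definition admissible (e : 'I_n -> nat) : bool :=
  in_box (fun=> 0) w e && (#|tops e| <= 1).

Lemma eq_admissible e1 e2 : e1 =1 e2 -> admissible e1 = admissible e2.
Proof.
move=> e12; rewrite /admissible /in_box; congr andb.
  by apply: eq_forallb => i; rewrite e12.
by congr (_ <= 1); apply: eq_card => i; rewrite !inE e12.
Qed.

Lemma box_tops (B : {set 'I_n}) e :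
  in_box (fun=> 0) w e && (tops e == B) =
  in_box (fun j => if j \in B then w j - 1 else 0)
         (fun j => if j \in B then w j else w j - 1) e.
Proof.
apply/andP/forallP => [[/forallP box /eqP <-] j | inB].
  have /andP [_ lt] := box j.
  by rewrite inE; have [top | ntop] := leqP (w j - 1) (e j); rewrite ?top ?ntop.
split.
  apply/forallP => j; have := inB j; case: (j \in B) => /andP [_ lt] //.
  exact: leq_trans lt (leq_subr 1 (w j)).
apply/eqP/setP => j; rewrite inE; have := inB j.
by case: (j \in B) => /andP [lo hi] //; rewrite leqNgt hi.
Qed.

Lemma admissible_indicator e :
  (admissible e : nat) =
  in_box (fun=> 0) (fun j => w j - 1) e
  + \sum_i in_box (fun j => if j == i then w i - 1 else 0)
                  (fun j => if j == i then w i else w j - 1) e.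
Proof.
rewrite /admissible -mulnb le1_card_indicator mulnDr big_distrr /= mulnb.
rewrite box_tops; congr (nat_of_bool _ + _).
  by apply: eq_forallb => j; rewrite inE.
apply: eq_bigr => i _; rewrite mulnb box_tops; congr nat_of_bool.
by apply: eq_forallb => j; rewrite inE; case: eqP => // ->.
Qed.

Hypothesis w_gt0 : forall i, 0 < w i.

Lemma card_admissible N : (forall i, w i <= N) ->
  #|[set f : {ffun 'I_n -> 'I_N} | admissible (fun i => f i)]|
  = \prod_i (w i - 1) + \sum_i \prod_(j | j != i) (w j - 1).
Proof.
move=> wN; have w1N i : w i - 1 <= N := leq_trans (leq_subr 1 _) (wN i).
rewrite -sum_indicator_card.
under eq_bigr do rewrite admissible_indicator.
rewrite big_split exchange_big /= sum_indicator_card card_box //.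
congr (_ + _); first by apply: eq_bigr => i _; rewrite subn0.
apply: eq_bigr => i _; rewrite sum_indicator_card card_box => [|j]; last by case: eqP.
rewrite (bigD1 i) //= eqxx subKn ?w_gt0 // mul1n.
by apply: eq_bigr => j /negbTE ->; rewrite subn0.
Qed.

End Admissible.

Local Open Scope ring_scope.

Lemma deriv_prod (R : comNzRingType) n (F : 'I_n -> {poly R}) :
  (\prod_i F i)^`() = \sum_i (F i)^`() * \prod_(j | j != i) F j.
Proof.
elim: n F => [|n IHn] F; first by rewrite !big_ord0 derivC.
have lt_max (j : 'I_n.+1) : (j != ord_max) = (j < n)%N.
  by rewrite -(inj_eq val_inj) /= ltn_neqAle -ltnS ltn_ord andbT.
rewrite big_ord_recr derivM IHn big_ord_recr /= mulr_suml; congr (_ + _).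
  apply: eq_bigr => i _; rewrite -mulrA; congr (_ * _).
  rewrite [RHS]big_mkcond big_ord_recr /= (eq_sym ord_max) lt_max /= ltn_ord.
  (* widen j != widen i computes to j != i *)
  by rewrite big_mkcond.
by rewrite mulrC (eq_bigl _ _ lt_max) big_ord_narrow.
Qed.

Lemma prod_plus_cofactors (R : comNzRingType) n (c : 'I_n -> R) (x : R)
    (Q := \prod_i ('X - (c i)%:P)) :
  \prod_i (x - c i) + \sum_i \prod_(j | j != i) (x - c j) = Q.[x] + Q^`().[x].
Proof.
rewrite /Q deriv_prod horner_sum !horner_prod; congr (_ + _).
  by apply: eq_bigr => i _; rewrite hornerXsubC.
apply: eq_bigr => i _; rewrite derivXsubC mul1r horner_prod.
by apply: eq_bigr => j _; rewrite hornerXsubC.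
Qed.

Lemma prod_step_roots (R : comNzRingType) n k : (k <= n)%N ->
  \prod_(i < n) ('X - (if (i < k)%N then 0 else 1)%:P)
  = 'X^k * ('X - 1) ^+ (n - k) :> {poly R}.
Proof.
move=> kn; rewrite (bigID (fun i : 'I_n => (i < k)%N)) /=.
rewrite (eq_bigr (fun=> 'X)) => [|i ->]; last by rewrite subr0.
rewrite [X in _ * X](eq_bigr (fun=> 'X - 1)) => [|i /negbTE ->]; last by rewrite polyC1.
rewrite !prodr_const; congr (_ ^+ _ * _ ^+ _).
  by rewrite (@eq_card _ _ [pred i : 'I_n | (0 <= i < k)%N]) ?card_ord_interval ?subn0.
rewrite (@eq_card _ _ [pred i : 'I_n | (k <= i < n)%N]) ?card_ord_interval // => i.
by rewrite unfold_in /= -leqNgt inE ltn_ord andbT.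
Qed.

Lemma theta_horner l (x : int) : theta l x = ('X^l).[x] + ('X^l)^`().[x].
Proof.
case: l => [|l]; first by rewrite /= expr0 derivC !hornerC addr0.
by rewrite derivXn !(hornerE, hornerMn) /= subn1 mulrDr -exprSr -natz mulr_natr.
Qed.

Lemma theta_binomial k s (x : int) (Q := 'X^k * ('X - 1) ^+ s : {poly int}) :
  Q.[x] + Q^`().[x]
  = \sum_(i < s.+1) (-1) ^+ i * ('C(s, i))%:Z * theta (k + s - i) x.
Proof.
have -> : Q = \sum_(i < s.+1) ((-1) ^+ i * ('C(s, i))%:Z) *: 'X^(k + s - i).
  rewrite /Q exprDn mulr_sumr; apply: eq_bigr => [[i /= lt_is]] _.
  rewrite -addnBA // exprD -mul_polyC rmorphM rmorphXn /= rmorphN rmorph1.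
  by rewrite -natz rmorph_nat; ring.
rewrite horner_sum raddf_sum horner_sum -big_split /=.
by apply: eq_bigr => i _; rewrite derivZ !hornerZ -mulrDr theta_horner.
Qed.

Section IdealMembership.
Variables (K : fieldType) (n : nat) (I : finType) (g : I -> {mpoly K[n]}).

Lemma in_ideal0 : in_ideal g 0.
Proof. by exists (fun=> 0); rewrite big1 // => i _; rewrite mul0r. Qed.

Lemma in_idealD p q : in_ideal g p -> in_ideal g q -> in_ideal g (p + q).
Proof.
move=> [c ->] [d ->]; exists (fun i => c i + d i).
by rewrite -big_split; apply: eq_bigr => i _; rewrite mulrDl.
Qed.

Lemma in_idealZ (k : K) p : in_ideal g p -> in_ideal g (k *: p).
Proof.
move=> [c ->]; exists (fun i => k *: c i).
by rewrite scaler_sumr; apply: eq_bigr => i _; rewrite scalerAl.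
Qed.

Lemma in_ideal_mulgen i q : in_ideal g (q * g i).
Proof.
exists (fun j => if j == i then q else 0).
by rewrite (bigD1 i) //= eqxx big1 ?addr0 // => j /negbTE ->; rewrite mul0r.
Qed.

Lemma in_ideal_sum (T : Type) (r : seq T) (P : pred T) (F : T -> {mpoly K[n]}) :
  (forall x, P x -> in_ideal g (F x)) -> in_ideal g (\sum_(x <- r | P x) F x).
Proof. by move=> IF; apply: big_ind IF; [exact: in_ideal0 | exact: in_idealD]. Qed.

End IdealMembership.

Section MonomialIdeal.
Variables (K : fieldType) (n : nat) (I : finType) (g : I -> {mpoly K[n]}).
Variables (live : pred I) (mon : I -> 'X_{1..n}).
Hypothesis gE : forall t, g t = if live t then 'X_[mon t] else 0.

Definition standard (m : 'X_{1..n}) : bool :=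
  [forall t, live t ==> ~~ (mon t <= m)%MM].

Lemma nonstandard_in_ideal m : ~~ standard m -> in_ideal g 'X_[m].
Proof.
move=> /forallPn [t]; rewrite negb_imply negbK => /andP [lt le].
have -> : 'X_[m] = 'X_[(m - mon t)%MM] * g t by rewrite gE lt -mpolyXD submK.
exact: in_ideal_mulgen.
Qed.

Lemma in_ideal_nonstandard_support p :
  (forall m, m \in msupp p -> ~~ standard m) -> in_ideal g p.
Proof.
move=> supp_ns; rewrite (mpolyE p) big_seq; apply: in_ideal_sum => m /supp_ns.
by move=> /nonstandard_in_ideal; apply: in_idealZ.
Qed.

Lemma in_ideal_standard_coef p m : in_ideal g p -> standard m -> p@_m = 0.
Proof.
move=> [c ->] /forallP std_m; rewrite raddf_sum big1 // => t _.
rewrite gE; case: ifP => lt; last by rewrite mulr0 raddf0.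
have := std_m t; rewrite lt /= => ndiv; apply/eqP.
rewrite -[_ == 0]negbK -mcoeff_msupp; apply: contra ndiv.
by rewrite (perm_mem (msuppMX _ _)) => /mapP [m' _ ->]; apply: lem_addr.
Qed.

Lemma quot_dim_standard d (b : 'I_d -> 'X_{1..n}) :
  injective b -> (forall k, standard (b k)) ->
  (forall m, standard m -> exists k, b k = m) -> quot_dim g d.
Proof.
move=> b_inj b_std b_onto.
have coef_sum (c : 'I_d -> K) k : (\sum_(l < d) c l *: 'X_[b l])@_(b k) = c k.
  rewrite raddf_sum (bigD1 k) //= big1 ?addr0 => [|l /negbTE lk].
    by rewrite mcoeffZ mcoeffX eqxx mulr1.
  by rewrite mcoeffZ mcoeffX (inj_eq b_inj) lk mulr0.
exists (fun k => 'X_[b k]); split=> [p | c c_in k].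
  exists (fun k => p@_(b k)); apply: in_ideal_nonstandard_support => m.
  rewrite mcoeff_msupp; apply: contraL => /b_onto [k <-].
  by rewrite mcoeffB (coef_sum (fun l => p@_(b l))) subrr eqxx.
by rewrite -(coef_sum c k); apply: in_ideal_standard_coef.
Qed.

End MonomialIdeal.

Lemma mnm1_mul_le n (i : 'I_n) k (m : 'X_{1..n}) :
  (U_(i) *+ k <= m)%MM = (k <= m i)%N.
Proof.
apply/mnm_lepP/idP => [le_m | le_k j].
  by have := le_m i; rewrite mulmnE mnm1E eqxx mul1n.
by rewrite mulmnE mnm1E; case: eqP => [<- | _]; rewrite ?mul1n ?mul0n.
Qed.

Lemma mnm1_mul2_le n (i j : 'I_n) k l (m : 'X_{1..n}) : i != j ->
  (U_(i) *+ k + U_(j) *+ l <= m)%MM = (k <= m i)%N && (l <= m j)%N.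
Proof.
move=> ij; apply/mnm_lepP/andP => [le_m | [le_k le_l] h].
  split; [have := le_m i | have := le_m j];
    rewrite mnmDE !mulmnE !mnm1E eqxx ?(negbTE ij) 1?eq_sym ?(negbTE ij);
    by rewrite ?mul1n ?mul0n ?addn0.
rewrite mnmDE !mulmnE !mnm1E.
have [<- | _] := eqVneq i h; first by rewrite eq_sym (negbTE ij) mul1n mul0n addn0.
by rewrite mul0n add0n; case: eqP => [<- | _]; rewrite ?mul1n ?mul0n.
Qed.

Lemma omega_gt0 n s a (i : 'I_n) : (1 <= a)%N -> ((1 <= s)%N -> (2 <= a)%N) ->
  (0 < omega s a i)%N.
Proof.
move=> a1 a2; rewrite /omega; case: ifP => // /negbT; rewrite -leqNgt => le_i.
suff /a2 : (1 <= s)%N by rewrite subn_gt0.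
by have := ltn_ord i; lia.
Qed.

Lemma omega_le n s a (i : 'I_n) : (omega s a i <= a)%N.
Proof. by rewrite /omega; case: ifP => // _; apply: leq_subr. Qed.

(* Exponent vectors of the standard monomials of I_{n,s}^{<a>}; all their
   entries are below a. *)
Definition std_exponents n s a : {set {ffun 'I_n -> 'I_a}} :=
  [set f : {ffun 'I_n -> 'I_a} | admissible (omega s a) (fun i => f i)].

Section IgensStandard.
Variables (K : fieldType) (n s a : nat).

Definition Igens_live (t : 'I_n + ('I_n * 'I_n)) : bool :=
  if t is inr (i, j) then i != j else true.

Definition Igens_mon (t : 'I_n + ('I_n * 'I_n)) : 'X_{1..n} :=
  match t with
  | inl i => U_(i) *+ omega s a i
  | inr (i, j) => U_(i) *+ (omega s a i - 1) + U_(j) *+ (omega s a j - 1)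
  end%MM.

Lemma IgensE t : Igens K s a t = if Igens_live t then 'X_[Igens_mon t] else 0.
Proof.
case: t => [i | [i j]] /=; first by rewrite mpolyXn.
by case: ifP => // _; rewrite mpolyXD !mpolyXn.
Qed.

Lemma standard_Igens (m : 'X_{1..n}) :
  standard Igens_live Igens_mon m = admissible (omega s a) (fun i => m i).
Proof.
rewrite /admissible card_le1_pairs.
apply/forallP/andP => [std | [/forallP box /forallP noPair] [i | [i j]]] /=.
  split; apply/forallP => i.
    by have := std (inl i); rewrite /= mnm1_mul_le -ltnNge.
  apply/forallP => j; apply/implyP => ij.
  by have := std (inr (i, j)); rewrite /= ij mnm1_mul2_le // !inE.
  by rewrite mnm1_mul_le -ltnNge; have /andP [] := box i.
apply/implyP => ij; rewrite mnm1_mul2_le //.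
by have /forallP/(_ j)/implyP/(_ ij) := noPair i; rewrite !inE.
Qed.

Lemma quot_dim_Igens : quot_dim (@Igens K n s a) #|std_exponents n s a|.
Proof.
pose mon_of (f : {ffun 'I_n -> 'I_a}) : 'X_{1..n} := [multinom (f i : nat) | i < n].
apply: (quot_dim_standard IgensE (b := fun k => mon_of (enum_val k))).
- move=> k1 k2 /= eq_mon; apply: enum_val_inj; apply/ffunP => i; apply/val_inj.
  by have := congr1 (fun m : 'X_{1..n} => m i) eq_mon; rewrite /= !mnmE.
- move=> k; rewrite standard_Igens.
  rewrite (@eq_admissible _ _ _ (fun i => enum_val k i)) => [|i]; last by rewrite mnmE.
  by have := enum_valP k; rewrite inE.
move=> m; rewrite standard_Igens => adm_m.
have m_lt_a i : (m i < a)%N.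
  have /andP [/forallP /(_ i) /andP [_ lt_mw] _] := adm_m.
  exact: leq_trans lt_mw (omega_le s a i).
pose f := [ffun i => Ordinal (m_lt_a i)].
have f_std : f \in std_exponents n s a.
  by rewrite inE (@eq_admissible _ _ _ (fun i => m i)) // => i; rewrite ffunE.
exists (enum_rank_in f_std f); rewrite enum_rankK_in //.
by apply/mnmP => i; rewrite mnmE ffunE.
Qed.

End IgensStandard.

Lemma card_std_exponents n s a :
  (s <= n)%N -> (1 <= a)%N -> ((1 <= s)%N -> (2 <= a)%N) ->
  (#|std_exponents n s a|)%:Z
  = \sum_(i < s.+1) (-1) ^+ i * ('C(s, i))%:Z * theta (n - i) ((a - 1)%:Z).
Proof.
move=> sn a1 a2; rewrite card_admissible => [| i | i]; last 2 first.
- exact: omega_gt0.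
- exact: omega_le.
set x := (a - 1)%:Z; set k := (n - s)%N.
(* omega_i - 1 = x - c_i with c_i = 0 on the first k indices and 1 after *)
have w_shift (i : 'I_n) : (omega s a i - 1)%:R = x - (if (i < k)%N then 0 else 1).
  have := omega_gt0 i a1 a2; rewrite /omega /x.
  by case: ifP => _ w_gt0; rewrite natz; lia.
rewrite -natz natrD natr_prod natr_sum.
under [X in _ + X]eq_bigr do rewrite natr_prod.
under eq_bigr do rewrite w_shift.
under [X in _ + X]eq_bigr do under eq_bigr do rewrite w_shift.
rewrite prod_plus_cofactors prod_step_roots ?leq_subr // subKn // theta_binomial.
by apply: eq_bigr => i _; rewrite subnK.
Qed.

Theorem lemma2 (K : fieldType) (n r a : nat) :
  (1 <= n)%N -> (r <= n)%N -> (1 <= a)%N -> ((1 <= r)%N -> (2 <= a)%N) ->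
  quot_dim (@Igens K n 0 a) ((a - 1) ^ (n - 1) * (a + n - 1))%N /\
  (exists d : nat, quot_dim (@Igens K n r a) d /\
     (d%:Z = \sum_(i < r.+1) (-1) ^+ i * ('C(r, i))%:Z
                * theta (n - i) ((a - 1)%N%:Z))).
Proof.
move=> n_gt0 le_rn a_gt0 ra; split; last first.
  by eexists; split; [exact: quot_dim_Igens | exact: card_std_exponents].
(* part (i) is the case s = 0 of the count, where the sum has one term *)
have := @card_std_exponents n 0 a (leq0n n) a_gt0 (fun s_gt0 => ltac:(done)).
rewrite big_ord1 expr0 mul1r bin0 mul1r subn0 /theta.
case: n n_gt0 {le_rn} => // n _ dimE.
suff -> : ((a - 1) ^ (n.+1 - 1) * (a + n.+1 - 1))%N = #|std_exponents n.+1 0 a|.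
  exact: quot_dim_Igens.
by apply/eqP; rewrite -eqz_nat dimE -addnBAC // PoszM PoszD -!natz natrX.
Qed.
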